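(* Fix $\theta\in(\theta^-,\theta^+)$, $\boldsymbol{\kappa}=(\kappa_1,\dots,\kappa_4)\in\mathbb{R}^4$, $\delta\theta_{\mathbf{u}_0},\delta\theta_{\mathbf{v}_0}\in\mathbb{R}$ and $\boldsymbol{\omega}_{\mathbf{u}_0},\boldsymbol{\omega}_{\mathbf{v}_0}\in\mathbb{R}^3$. As $\ell\to0$ (all these parameters fixed), $$\mathbf{t}^{(\ell)}_{1,-,\mathbf{v}_0}-\mathbf{t}^{(\ell)}_{1,+},\quad\mathbf{t}^{(\ell)}_{3,-,\mathbf{v}_0}-\mathbf{t}^{(\ell)}_{3,+},\quad\mathbf{t}^{(\ell)}_{2,-,\mathbf{u}_0}-\mathbf{t}^{(\ell)}_{2,+},\quad\mathbf{t}^{(\ell)}_{4,-,\mathbf{u}_0}-\mathbf{t}^{(\ell)}_{4,+}$$ are all $O(\ell^2)$ if and only if (a) $\boldsymbol{\omega}_{\mathbf{u}_0}\times\mathbf{v}(\theta)+\delta\theta_{\mathbf{u}_0}\mathbf{v}'(\theta)=\boldsymbol{\omega}_{\mathbf{v}_0}\times\mathbf{u}(\theta)+\delta\theta_{\mathbf{v}_0}\mathbf{u}'(\theta)$ and $\boldsymbol{\omega}_{\mathbf{u}_0}\cdot\mathbf{v}'(\theta)=\boldsymbol{\omega}_{\mathbf{v}_0}\cdot\mathbf{u}'(\theta)$; and (b) $\boldsymbol{\kappa}=\mathbf{B}(\theta)(\boldsymbol{\omega}_{\mathbf{u}_0},\delta\theta_{\mathbf{u}_0},\boldsymbol{\omega}_{\mathbf{v}_0},\delta\theta_{\mathbf{v}_0})$,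 i.e. $\kappa_1=\frac{(\mathbf{t}_2\times\mathbf{t}_3)\cdot\boldsymbol{\omega}_{\mathbf{u}_0}+(\mathbf{t}_3\cdot\mathbf{t}_2')\delta\theta_{\mathbf{u}_0}}{V_{123}}$, $\kappa_2=\frac{(\mathbf{t}_3\times\mathbf{t}_4)\cdot\boldsymbol{\omega}_{\mathbf{v}_0}+(\mathbf{t}_3'\cdot\mathbf{t}_4)\delta\theta_{\mathbf{v}_0}}{V_{234}}$, $\kappa_3=\frac{(\mathbf{t}_4\times\mathbf{t}_1)\cdot\boldsymbol{\omega}_{\mathbf{u}_0}+(\mathbf{t}_1\cdot\mathbf{t}_4')\delta\theta_{\mathbf{u}_0}}{V_{314}}$, $\kappa_4=\frac{(\mathbf{t}_1\times\mathbf{t}_2)\cdot\boldsymbol{\omega}_{\mathbf{v}_0}+(\mathbf{t}_1'\cdot\mathbf{t}_2)\delta\theta_{\mathbf{v}_0}}{V_{421}}$ (all $\mathbf{t}_i$ evaluated at $\theta$). Moreover, condition (a) holds if and only if there are $k,\tau\in\mathbb{R}$ with $\boldsymbol{\omega}_{\mathbf{u}_0}=\tau\mathbf{u}(\theta)+k(\mathbf{u}'\cdot\mathbf{u})\mathbf{v}(\theta)+\frac{\delta\theta_{\mathbf{u}_0}\mathbf{v}'\cdot\mathbf{u}-\delta\theta_{\mathbf{v}_0}\mathbf{u}'\cdot\mathbf{u}}{\mathbf{e}_3\cdot(\mathbf{u}\times\mathbf{v})}\mathbf{e}_3$ and $\boldsymbol{\omega}_{\mathbf{v}_0}=k(\mathbf{v}'\cdot\mathbf{v})\mathbf{u}(\theta)-\tau\mathbf{v}(\theta)+\frac{\delta\theta_{\mathbf{u}_0}\mathbf{v}'\cdot\mathbf{v}-\delta\theta_{\mathbf{v}_0}\mathbf{u}'\cdot\mathbf{v}}{\mathbf{e}_3\cdot(\mathbf{u}\times\mathbf{v})}\mathbf{e}_3$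 (with $\mathbf{u},\mathbf{v},\mathbf{u}',\mathbf{v}'$ evaluated at $\theta$).
   Context: Design: $\mathbf{t}_1^r,\dots,\mathbf{t}_4^r\in\mathbb{R}^3$ with $\mathbf{t}_i^r\cdot(\mathbf{t}_j^r\times\mathbf{t}_k^r)\neq0$ for $ijk\in\{123,234,341,412\}$, non-self-intersecting, with $\mathbf{u}_0:=\mathbf{t}_1^r-\mathbf{t}_3^r$, $\mathbf{v}_0:=\mathbf{t}_2^r-\mathbf{t}_4^r$ orthogonal to $\mathbf{e}_3$, $\mathbf{e}_3\cdot(\mathbf{u}_0\times\mathbf{v}_0)>0$. $\mathbf{t}_i:(\theta^-,\theta^+)\to\mathbb{R}^3$ is the analytic mechanism parameterization of the cell (rigid folding preserving crease lengths, adjacent-crease angles and the signs of the triple products $\mathbf{t}_i\cdot(\mathbf{t}_j\times\mathbf{t}_k)$, $ijk\in\{123,234,341,412\}$, with $\mathbf{t}_i(0)=\mathbf{t}_i^r$, $\theta$ the change of dihedral angle at the $\mathbf{t}_4$ crease, normalized so that $\mathbf{u}(\theta):=\mathbf{t}_1(\theta)-\mathbf{t}_3(\theta)$ and $\mathbf{v}(\theta):=\mathbf{t}_2(\theta)-\mathbf{t}_4(\theta)$ are orthogonal to $\mathbf{e}_3$ with $\mathbf{e}_3\cdot(\mathbf{u}\times\mathbf{v})>0$); in particular $\mathbf{u}'\cdot\mathbf{u}$ and $\mathbf{v}'\cdot\mathbf{v}$ never vanish and $V_{ijk}(\theta):=\mathbf{t}_i(\theta)\cdot(\mathbf{t}_j(\theta)\times\mathbf{t}_k(\theta))\neq0$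 for distinct $i,j,k$. Primes are $d/d\theta$; $(\mathbf{a}\times)\mathbf{b}:=\mathbf{a}\times\mathbf{b}$. Bent boundary tangents (arguments $(\theta,\boldsymbol{\kappa})$ suppressed on the right): $\mathbf{t}^{(\ell)}_{1,-}=\mathbf{t}_1+\ell\kappa_4(\mathbf{t}_4\times\mathbf{t}_1)$, $\mathbf{t}^{(\ell)}_{1,+}=\mathbf{t}_1+\ell\kappa_1(\mathbf{t}_1\times\mathbf{t}_2)$, $\mathbf{t}^{(\ell)}_{2,-}=\mathbf{t}_2+\ell\kappa_2(\mathbf{t}_2\times\mathbf{t}_3)$, $\mathbf{t}^{(\ell)}_{2,+}=\mathbf{t}_2+\ell\kappa_1(\mathbf{t}_1\times\mathbf{t}_2)$, $\mathbf{t}^{(\ell)}_{3,-}=\mathbf{t}_3+\ell\kappa_3(\mathbf{t}_3\times\mathbf{t}_4)$, $\mathbf{t}^{(\ell)}_{3,+}=\mathbf{t}_3+\ell\kappa_2(\mathbf{t}_2\times\mathbf{t}_3)$, $\mathbf{t}^{(\ell)}_{4,-}=\mathbf{t}_4+\ell\kappa_3(\mathbf{t}_3\times\mathbf{t}_4)$, $\mathbf{t}^{(\ell)}_{4,+}=\mathbf{t}_4+\ell\kappa_4(\mathbf{t}_4\times\mathbf{t}_1)$, with $\mathbf{t}_i=\mathbf{t}_i(\theta)$. Neighbor tangents: $\mathbf{t}^{(\ell)}_{i,\pm,\mathbf{v}_0}:=(\mathbf{I}+\ell(\boldsymbol{\omega}_{\mathbf{v}_0}\times))\mathbf{t}^{(\ell)}_{i,\pm}(\theta+\ell\delta\theta_{\mathbf{v}_0},\boldsymbol{\kappa})$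 and $\mathbf{t}^{(\ell)}_{i,\pm,\mathbf{u}_0}:=(\mathbf{I}+\ell(\boldsymbol{\omega}_{\mathbf{u}_0}\times))\mathbf{t}^{(\ell)}_{i,\pm}(\theta+\ell\delta\theta_{\mathbf{u}_0},\boldsymbol{\kappa})$; the unsubscripted $\mathbf{t}^{(\ell)}_{i,+}$ means $\mathbf{t}^{(\ell)}_{i,+}(\theta,\boldsymbol{\kappa})$. *)

From Stdlib Require Import Reals.
From Coquelicot Require Import Coquelicot.
Open Scope R_scope.

Record vec3 := V3 { vx : R ; vy : R ; vz : R }.

Definition vadd (a b : vec3) : vec3 := V3 (vx a + vx b) (vy a + vy b) (vz a + vz b).
Definition vsub (a b : vec3) : vec3 := V3 (vx a - vx b) (vy a - vy b) (vz a - vz b).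
Definition vscal (c : R) (a : vec3) : vec3 := V3 (c * vx a) (c * vy a) (c * vz a).
Definition vzero : vec3 := V3 0 0 0.
Definition dot (a b : vec3) : R := vx a * vx b + vy a * vy b + vz a * vz b.
Definition cross (a b : vec3) : vec3 :=
  V3 (vy a * vz b - vz a * vy b) (vz a * vx b - vx a * vz b) (vx a * vy b - vy a * vx b).
Definition vnorm (a : vec3) : R := sqrt (dot a a).
Definition e3 : vec3 := V3 0 0 1.
Definition triple (a b c : vec3) : R := dot a (cross b c).

Definition vderiv (f : R -> vec3) (x : R) : vec3 :=
  V3 (Derive (fun s => vx (f s)) x) (Derive (fun s => vy (f s)) x) (Derive (fun s => vz (f s)) x).

Definition analytic_on (a b : R) (g : R -> R) : Prop :=
  forall x0, a < x0 < b ->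
    exists (c : nat -> R) (r : R), 0 < r /\
      forall x, a < x < b -> Rabs (x - x0) < r -> is_pseries c (x - x0) (g x).

Definition vanalytic_on (a b : R) (f : R -> vec3) : Prop :=
  analytic_on a b (fun s => vx (f s)) /\ analytic_on a b (fun s => vy (f s)) /\
  analytic_on a b (fun s => vz (f s)).

Definition in_tri (p a b : vec3) : Prop :=
  exists s r, 0 <= s /\ 0 <= r /\ s + r <= 1 /\ p = vadd (vscal s a) (vscal r b).
Definition in_seg (p a : vec3) : Prop := exists s, 0 <= s <= 1 /\ p = vscal s a.

Definition non_self_intersecting (t1 t2 t3 t4 : vec3) : Prop :=
  (forall p, in_tri p t1 t2 -> in_tri p t2 t3 -> in_seg p t2) /\
  (forall p, in_tri p t2 t3 -> in_tri p t3 t4 -> in_seg p t3) /\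
  (forall p, in_tri p t3 t4 -> in_tri p t4 t1 -> in_seg p t4) /\
  (forall p, in_tri p t4 t1 -> in_tri p t1 t2 -> in_seg p t1) /\
  (forall p, in_tri p t1 t2 -> in_tri p t3 t4 -> p = vzero) /\
  (forall p, in_tri p t2 t3 -> in_tri p t4 t1 -> p = vzero).

Definition design (r1 r2 r3 r4 : vec3) : Prop :=
  triple r1 r2 r3 <> 0 /\ triple r2 r3 r4 <> 0 /\ triple r3 r4 r1 <> 0 /\
  triple r4 r1 r2 <> 0 /\
  non_self_intersecting r1 r2 r3 r4 /\
  dot (vsub r1 r3) e3 = 0 /\ dot (vsub r2 r4) e3 = 0 /\
  0 < dot e3 (cross (vsub r1 r3) (vsub r2 r4)).

(** theta is the change of the (signed) dihedral angle at the t4 crease, between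
    the panels spanned by (t3,t4) and (t4,t1). *)
Definition dihedral_change_t4 (a b : R) (t1 t3 t4 : R -> vec3) : Prop :=
  exists phi0, forall s, a < s < b ->
    let na := cross (t3 s) (t4 s) in
    let nb := cross (t4 s) (t1 s) in
    dot na nb = vnorm na * vnorm nb * cos (phi0 + s) /\
    dot (t4 s) (cross na nb) = vnorm (t4 s) * vnorm na * vnorm nb * sin (phi0 + s).

Definition mechanism (a b : R) (r1 r2 r3 r4 : vec3) (t1 t2 t3 t4 : R -> vec3) : Prop :=
  a < 0 < b /\
  vanalytic_on a b t1 /\ vanalytic_on a b t2 /\ vanalytic_on a b t3 /\ vanalytic_on a b t4 /\
  t1 0 = r1 /\ t2 0 = r2 /\ t3 0 = r3 /\ t4 0 = r4 /\
  (forall s, a < s < b ->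
     dot (t1 s) (t1 s) = dot r1 r1 /\ dot (t2 s) (t2 s) = dot r2 r2 /\
     dot (t3 s) (t3 s) = dot r3 r3 /\ dot (t4 s) (t4 s) = dot r4 r4 /\
     dot (t1 s) (t2 s) = dot r1 r2 /\ dot (t2 s) (t3 s) = dot r2 r3 /\
     dot (t3 s) (t4 s) = dot r3 r4 /\ dot (t4 s) (t1 s) = dot r4 r1 /\
     0 < triple (t1 s) (t2 s) (t3 s) * triple r1 r2 r3 /\
     0 < triple (t2 s) (t3 s) (t4 s) * triple r2 r3 r4 /\
     0 < triple (t3 s) (t4 s) (t1 s) * triple r3 r4 r1 /\
     0 < triple (t4 s) (t1 s) (t2 s) * triple r4 r1 r2 /\
     (* normalization: u, v orthogonal to e3 and e3.(u x v) > 0 *)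
     dot (vsub (t1 s) (t3 s)) e3 = 0 /\ dot (vsub (t2 s) (t4 s)) e3 = 0 /\
     0 < dot e3 (cross (vsub (t1 s) (t3 s)) (vsub (t2 s) (t4 s)))) /\
  dihedral_change_t4 a b t1 t3 t4.

Definition bigO_l2 (F : R -> vec3) : Prop :=
  exists C d, 0 < d /\ forall l, 0 < l < d -> vnorm (F l) <= C * l ^ 2.

Definition nbr (l : R) (w : vec3) (dth : R) (f : R -> vec3) (th : R) : vec3 :=
  let x := f (th + l * dth) in vadd x (vscal l (cross w x)).

Definition t1m (t1 t2 t3 t4 : R -> vec3) (l k1 k2 k3 k4 : R) (s : R) : vec3 :=
  vadd (t1 s) (vscal (l * k4) (cross (t4 s) (t1 s))).
Definition t1p (t1 t2 t3 t4 : R -> vec3) (l k1 k2 k3 k4 : R) (s : R) : vec3 :=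
  vadd (t1 s) (vscal (l * k1) (cross (t1 s) (t2 s))).
Definition t2m (t1 t2 t3 t4 : R -> vec3) (l k1 k2 k3 k4 : R) (s : R) : vec3 :=
  vadd (t2 s) (vscal (l * k2) (cross (t2 s) (t3 s))).
Definition t2p (t1 t2 t3 t4 : R -> vec3) (l k1 k2 k3 k4 : R) (s : R) : vec3 :=
  vadd (t2 s) (vscal (l * k1) (cross (t1 s) (t2 s))).
Definition t3m (t1 t2 t3 t4 : R -> vec3) (l k1 k2 k3 k4 : R) (s : R) : vec3 :=
  vadd (t3 s) (vscal (l * k3) (cross (t3 s) (t4 s))).
Definition t3p (t1 t2 t3 t4 : R -> vec3) (l k1 k2 k3 k4 : R) (s : R) : vec3 :=
  vadd (t3 s) (vscal (l * k2) (cross (t2 s) (t3 s))).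
Definition t4m (t1 t2 t3 t4 : R -> vec3) (l k1 k2 k3 k4 : R) (s : R) : vec3 :=
  vadd (t4 s) (vscal (l * k3) (cross (t3 s) (t4 s))).
Definition t4p (t1 t2 t3 t4 : R -> vec3) (l k1 k2 k3 k4 : R) (s : R) : vec3 :=
  vadd (t4 s) (vscal (l * k4) (cross (t4 s) (t1 s))).

(* Every tangent entering the four differences is analytic in ℓ, so each difference is
   ℓ E + O(ℓ^2) for an explicit "mismatch" vector E (a first-order expansion whose
   remainder is bounded, read off the power series); it is O(ℓ^2) iff E = 0.
   Differentiating the rigid-folding constraints gives t_i'·t_i = 0 and
   t_i'·t_j + t_j'·t_i = 0 for adjacent creases.  With these, the dot product of E_i with
   the next crease is the κ-equation (b), the alternating sum E_1 - E_3 - E_2 + E_4 is the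
   vector equation in (a), and a weighted combination of the remaining coordinates is the
   scalar equation in (a).  Conversely, under (a) and (b) each E_i is perpendicular to two
   creases, the closure of the vertex leaves a single unknown multiple, and the scalar
   equation kills it because its coefficient is -V_124 V_234 (u'·u) ≠ 0.  The description
   of (a) is linear algebra in the plane orthogonal to e_3, in the basis (u, v). *)

From Stdlib Require Import Reals Lra Psatz.
From Coquelicot Require Import Coquelicot.
Open Scope R_scope.

(** * First-order expansions with bounded quadratic remainder *)

Definition taylor1 (f : R -> R) (a b : R) : Prop :=
  exists d M, 0 < d /\ forall l, Rabs l < d ->
    exists q, Rabs q <= M /\ f l = a + l * b + l * l * q.

Lemma Rabs_lt_min_l l d1 d2 : Rabs l < Rmin d1 d2 -> Rabs l < d1.
Proof. intros H; eapply Rlt_le_trans; [exact H | apply Rmin_l]. Qed.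

Lemma Rabs_lt_min_r l d1 d2 : Rabs l < Rmin d1 d2 -> Rabs l < d2.
Proof. intros H; eapply Rlt_le_trans; [exact H | apply Rmin_r]. Qed.

Lemma Rabs_plus_le x y X Y : Rabs x <= X -> Rabs y <= Y -> Rabs (x + y) <= X + Y.
Proof. intros; eapply Rle_trans; [apply Rabs_triang | lra]. Qed.

Lemma Rabs_mult_le x y X Y : Rabs x <= X -> Rabs y <= Y -> Rabs (x * y) <= X * Y.
Proof. intros; rewrite Rabs_mult; apply Rmult_le_compat; auto using Rabs_pos. Qed.

Lemma taylor1_at0 f a b : taylor1 f a b -> f 0 = a.
Proof.
  intros (d & M & Hd & H). destruct (H 0) as (q & _ & ->); [rewrite Rabs_R0; lra | ring].
Qed.

Lemma taylor1_eq f a b a' b' : taylor1 f a b -> a = a' -> b = b' -> taylor1 f a' b'.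
Proof. now intros H -> ->. Qed.

Lemma taylor1_const c : taylor1 (fun _ => c) c 0.
Proof.
  exists 1, 0; split; [lra |]. intros l _; exists 0; split; [rewrite Rabs_R0; lra | ring].
Qed.

Lemma taylor1_id : taylor1 (fun l => l) 0 1.
Proof.
  exists 1, 0; split; [lra |]. intros l _; exists 0; split; [rewrite Rabs_R0; lra | ring].
Qed.

Lemma taylor1_plus f g a b c d :
  taylor1 f a b -> taylor1 g c d -> taylor1 (fun l => f l + g l) (a + c) (b + d).
Proof.
  intros (d1 & M1 & Hd1 & H1) (d2 & M2 & Hd2 & H2).
  exists (Rmin d1 d2), (M1 + M2); split; [apply Rmin_pos; lra |].
  intros l Hl.
  destruct (H1 l (Rabs_lt_min_l _ _ _ Hl)) as (q1 & Hq1 & ->).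
  destruct (H2 l (Rabs_lt_min_r _ _ _ Hl)) as (q2 & Hq2 & ->).
  exists (q1 + q2); split; [apply Rabs_plus_le; auto | ring].
Qed.

Lemma taylor1_opp f a b : taylor1 f a b -> taylor1 (fun l => - f l) (- a) (- b).
Proof.
  intros (d & M & Hd & H). exists d, M; split; auto.
  intros l Hl. destruct (H l Hl) as (q & Hq & ->).
  exists (- q); split; [rewrite Rabs_Ropp; auto | ring].
Qed.

Lemma taylor1_minus f g a b c d :
  taylor1 f a b -> taylor1 g c d -> taylor1 (fun l => f l - g l) (a - c) (b - d).
Proof. intros Hf Hg. exact (taylor1_plus _ _ _ _ _ _ Hf (taylor1_opp _ _ _ Hg)). Qed.

Lemma taylor1_mult f g a b c d :
  taylor1 f a b -> taylor1 g c d -> taylor1 (fun l => f l * g l) (a * c) (a * d + b * c).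
Proof.
  intros (d1 & M1 & Hd1 & H1) (d2 & M2 & Hd2 & H2).
  exists (Rmin 1 (Rmin d1 d2)),
    (Rabs b * Rabs d + Rabs a * M2 + Rabs c * M1 + 1 * Rabs b * M2 + 1 * Rabs d * M1
     + (1 * 1) * M1 * M2).
  split; [apply Rmin_pos; [lra | apply Rmin_pos; lra] |].
  intros l Hl.
  assert (Hl1 : Rabs l <= 1) by (left; exact (Rabs_lt_min_l _ _ _ Hl)).
  pose proof (Rabs_lt_min_r _ _ _ Hl) as Hl2.
  destruct (H1 l (Rabs_lt_min_l _ _ _ Hl2)) as (q1 & Hq1 & ->).
  destruct (H2 l (Rabs_lt_min_r _ _ _ Hl2)) as (q2 & Hq2 & ->).
  exists (b * d + a * q2 + c * q1 + l * b * q2 + l * d * q1 + (l * l) * q1 * q2); split.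
  - repeat apply Rabs_plus_le; repeat apply Rabs_mult_le; auto; apply Rle_refl.
  - ring.
Qed.

Lemma taylor1_comp_scal f a b c : taylor1 f a b -> taylor1 (fun l => f (l * c)) a (c * b).
Proof.
  intros (d & M & Hd & H).
  pose proof (Rabs_pos c) as Hc.
  exists (d / (Rabs c + 1)), (Rabs c * Rabs c * M); split.
  { apply Rdiv_lt_0_compat; lra. }
  intros l Hl. destruct (H (l * c)) as (q & Hq & ->).
  { rewrite Rabs_mult. pose proof (Rabs_pos l).
    apply Rmult_lt_compat_r with (r := Rabs c + 1) in Hl; [| lra].
    unfold Rdiv in Hl. rewrite Rmult_assoc, Rinv_l in Hl by lra. nra. }
  exists (c * c * q); split; [| ring].
  rewrite !Rabs_mult. apply Rmult_le_compat_l; auto. apply Rmult_le_pos; apply Rabs_pos.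
Qed.

Lemma Rabs_le_linear_eq0 b K d : 0 < d -> (forall l, 0 < l < d -> Rabs b <= K * l) -> b = 0.
Proof.
  intros Hd H. destruct (Req_dec b 0) as [| Hb]; auto. exfalso.
  pose proof (Rabs_pos_lt _ Hb) as Hp.
  set (K' := Rabs K + 1).
  assert (HK : 0 < K') by (unfold K'; pose proof (Rabs_pos K); lra).
  set (l := Rmin (d / 2) (Rabs b / (2 * K'))).
  assert (Hl0 : 0 < l) by (apply Rmin_pos; [lra | apply Rdiv_lt_0_compat; lra]).
  assert (Hld : l < d) by (eapply Rle_lt_trans; [apply Rmin_l | lra]).
  assert (Hlb : K' * l <= Rabs b / 2).
  { apply Rle_trans with (K' * (Rabs b / (2 * K'))).
    - apply Rmult_le_compat_l; [lra | apply Rmin_r].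
    - right; field; lra. }
  specialize (H l (conj Hl0 Hld)).
  assert (K * l <= K' * l) by (unfold K'; pose proof (Rle_abs K); nra).
  lra.
Qed.

Lemma taylor1_slope_eq0 f b C d :
  taylor1 f 0 b -> 0 < d -> (forall l, 0 < l < d -> Rabs (f l) <= C * l ^ 2) -> b = 0.
Proof.
  intros (d1 & M & Hd1 & H) Hd HO.
  apply (Rabs_le_linear_eq0 _ (C + M) (Rmin d d1)); [apply Rmin_pos; lra |].
  intros l [Hl0 Hl].
  assert (Hla : Rabs l = l) by (apply Rabs_pos_eq; lra).
  destruct (H l) as (q & Hq & E).
  { rewrite Hla; eapply Rlt_le_trans; [exact Hl | apply Rmin_r]. }
  specialize (HO l (conj Hl0 (Rlt_le_trans _ _ _ Hl (Rmin_l _ _)))).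
  assert (Hlb : Rabs (l * b) <= C * l ^ 2 + M * l ^ 2).
  { replace (l * b) with (f l - l * l * q) by (rewrite E; ring).
    unfold Rminus. eapply Rle_trans; [apply Rabs_triang |]. rewrite Rabs_Ropp.
    apply Rplus_le_compat; auto. rewrite !Rabs_mult, Hla. simpl. nra. }
  rewrite Rabs_mult, Hla in Hlb. simpl in Hlb.
  apply (Rmult_le_reg_l l); [lra | nra].
Qed.

Lemma taylor1_O2 f : taylor1 f 0 0 ->
  exists d M, 0 < d /\ forall l, Rabs l < d -> Rabs (f l) <= M * l ^ 2.
Proof.
  intros (d & M & Hd & H). exists d, M; split; auto.
  intros l Hl. destruct (H l Hl) as (q & Hq & ->).
  replace (0 + l * 0 + l * l * q) with (l ^ 2 * q) by ring.
  rewrite Rabs_mult, (Rabs_pos_eq (l ^ 2)) by apply pow2_ge_0.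
  rewrite Rmult_comm. apply Rmult_le_compat_r; auto using pow2_ge_0.
Qed.

Lemma taylor1_locally_const f c a b d :
  0 < d -> (forall l, Rabs l < d -> f l = c) -> taylor1 f a b -> b = 0.
Proof.
  intros Hd Hf H.
  assert (Ha : a = c) by (rewrite <- (taylor1_at0 _ _ _ H); apply Hf; rewrite Rabs_R0; lra).
  subst a.
  apply (taylor1_slope_eq0 (fun l => f l - c) b 0 d); auto.
  - apply (taylor1_eq _ _ _ _ _ (taylor1_minus _ _ _ _ _ _ H (taylor1_const c))); ring.
  - intros l Hl. rewrite Hf by (rewrite Rabs_pos_eq; lra).
    rewrite Rminus_diag, Rabs_R0. lra.
Qed.

Lemma taylor1_Derive g x0 a b : taylor1 (fun l => g (x0 + l)) a b -> Derive g x0 = b.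
Proof.
  intros H. pose proof (taylor1_at0 _ _ _ H) as Hg0. cbv beta in Hg0; rewrite Rplus_0_r in Hg0.
  destruct H as (d & M & Hd & H).
  apply is_derive_unique, is_derive_Reals. intros eps Heps.
  pose proof (Rabs_pos M) as HM.
  assert (Hdl : 0 < Rmin d (eps / (Rabs M + 1)))
    by (apply Rmin_pos; [lra | apply Rdiv_lt_0_compat; lra]).
  exists (mkposreal _ Hdl). intros h Hh Hhd. simpl in Hhd.
  destruct (H h (Rabs_lt_min_l _ _ _ Hhd)) as (q & Hq & ->).
  rewrite Hg0.
  replace ((a + h * b + h * h * q - a) / h - b) with (h * q) by (field; auto).
  pose proof (Rabs_lt_min_r _ _ _ Hhd) as Hh2.
  assert (Hhe : Rabs h * (Rabs M + 1) < eps).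
  { apply Rmult_lt_compat_r with (r := Rabs M + 1) in Hh2; [| lra].
    unfold Rdiv in Hh2; rewrite Rmult_assoc, Rinv_l in Hh2; lra. }
  rewrite Rabs_mult. pose proof (Rle_abs M). pose proof (Rabs_pos h). pose proof (Rabs_pos q). nra.
Qed.

(* f l = c0 + l c1 + l^2 g l, where g, the power series of the twice-shifted coefficients,
   is continuous and hence bounded near 0. *)
Lemma pseries_taylor1 (c : nat -> R) (f : R -> R) r :
  0 < r -> (forall l, Rabs l < r -> is_pseries c l (f l)) -> taylor1 f (c 0%nat) (c 1%nat).
Proof.
  intros Hr Hf.
  set (rho := r / 2).
  assert (Hrho : 0 < rho) by (unfold rho; lra).
  assert (Hrad : Rbar_le rho (CV_radius c)).
  { apply (proj1 (CV_radius_bounded c)).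
    assert (Hlim : is_lim_seq (fun n => c n * rho ^ n) 0).
    { apply ex_series_lim_0. exists (f rho).
      apply (is_series_ext (fun n => scal (pow_n rho n) (c n))).
      - intros n; rewrite pow_n_pow; apply Rmult_comm.
      - apply Hf. rewrite Rabs_pos_eq; unfold rho; lra. }
    destruct (filterlim_bounded _ (ex_intro _ 0 Hlim)) as [M HM]. exists M; exact HM. }
  set (c2 := PS_decr_1 (PS_decr_1 c)).
  assert (Hrad2 : Rbar_le rho (CV_radius c2)) by (unfold c2; rewrite !CV_radius_decr_1; auto).
  assert (Hinside : forall a l, Rbar_le rho (CV_radius a) -> Rabs l < rho -> ex_pseries a l).
  { intros a l Ha Hl. apply CV_radius_inside. eapply Rbar_lt_le_trans; [| exact Ha]. exact Hl. }
  assert (Hexp : forall l, Rabs l < rho -> f l = c 0%nat + l * (c 1%nat + l * PSeries c2 l)).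
  { intros l Hl. rewrite <- (is_pseries_unique _ _ _ (Hf l ltac:(unfold rho in Hl; lra))).
    rewrite PSeries_decr_1 by (apply Hinside; auto).
    rewrite PSeries_decr_1 by (apply Hinside; auto; rewrite CV_radius_decr_1; auto).
    reflexivity. }
  destruct (bounded_continuity (PSeries c2) (- (rho / 2)) (rho / 2)) as [M HM].
  { intros x Hx. apply continuity_pt_filterlim, PSeries_continuity.
    eapply Rbar_lt_le_trans; [| exact Hrad2]. simpl. apply Rabs_def1; lra. }
  exists (rho / 2), M; split; [lra |].
  intros l Hl. pose proof (Rabs_def2 _ _ Hl) as Hl'.
  exists (PSeries c2 l); split.
  - left; apply (HM l); lra.
  - rewrite Hexp by lra. ring.
Qed.

Lemma analytic_taylor1 a b g x0 : analytic_on a b g -> a < x0 < b ->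
  taylor1 (fun l => g (x0 + l)) (g x0) (Derive g x0).
Proof.
  intros Han Hx. destruct (Han x0 Hx) as (c & r & Hr & Hs).
  set (r' := Rmin r (Rmin (b - x0) (x0 - a))).
  assert (Hr' : 0 < r') by (apply Rmin_pos; [lra | apply Rmin_pos; lra]).
  assert (H : taylor1 (fun l => g (x0 + l)) (c 0%nat) (c 1%nat)).
  { apply (pseries_taylor1 _ _ r'); auto.
    intros l Hl. pose proof (Rabs_def2 _ _ (Rabs_lt_min_r _ _ _ Hl)) as Hl'.
    pose proof (Rabs_lt_min_l _ _ _ Hl) as Hlr.
    replace l with (x0 + l - x0) at 1 by ring. apply Hs.
    - pose proof (Rmin_l (b - x0) (x0 - a)); pose proof (Rmin_r (b - x0) (x0 - a)). lra.
    - replace (x0 + l - x0) with l by ring; lra. }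
  apply (taylor1_eq _ _ _ _ _ H).
  - rewrite <- (taylor1_at0 _ _ _ H), Rplus_0_r. reflexivity.
  - symmetry; exact (taylor1_Derive _ _ _ _ H).
Qed.

Lemma vec3_ext (X Y : vec3) : vx X = vx Y -> vy X = vy Y -> vz X = vz Y -> X = Y.
Proof. destruct X, Y; simpl; intros -> -> ->; reflexivity. Qed.

(* Projecting before unfolding matters: unfolding [cross] on nested vector expressions first
   duplicates subterms exponentially. *)
Ltac vec_ring := unfold triple, dot; try apply vec3_ext; simpl; ring.

Definition vtaylor1 (F : R -> vec3) (A B : vec3) : Prop :=
  taylor1 (fun l => vx (F l)) (vx A) (vx B) /\
  taylor1 (fun l => vy (F l)) (vy A) (vy B) /\
  taylor1 (fun l => vz (F l)) (vz A) (vz B).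

Ltac taylor1_build := first
  [ eassumption | apply taylor1_const | apply taylor1_id
  | apply taylor1_plus; taylor1_build | apply taylor1_minus; taylor1_build
  | apply taylor1_mult; taylor1_build | apply taylor1_opp; taylor1_build ].

Ltac vtaylor1_components :=
  repeat match goal with H : vtaylor1 _ _ _ |- _ => destruct H as (? & ? & ?) end;
  repeat split; simpl;
  (eapply taylor1_eq; [taylor1_build | simpl; ring | simpl; ring]).

Lemma vtaylor1_eq F A B A' B' : vtaylor1 F A B -> A = A' -> B = B' -> vtaylor1 F A' B'.
Proof. now intros H -> ->. Qed.

Lemma vtaylor1_const C : vtaylor1 (fun _ => C) C vzero.
Proof. vtaylor1_components. Qed.

Lemma vtaylor1_add F G A B C D : vtaylor1 F A B -> vtaylor1 G C D ->
  vtaylor1 (fun l => vadd (F l) (G l)) (vadd A C) (vadd B D).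
Proof. intros; vtaylor1_components. Qed.

Lemma vtaylor1_sub F G A B C D : vtaylor1 F A B -> vtaylor1 G C D ->
  vtaylor1 (fun l => vsub (F l) (G l)) (vsub A C) (vsub B D).
Proof. intros; vtaylor1_components. Qed.

Lemma vtaylor1_scal f F a b A B : taylor1 f a b -> vtaylor1 F A B ->
  vtaylor1 (fun l => vscal (f l) (F l)) (vscal a A) (vadd (vscal a B) (vscal b A)).
Proof. intros; vtaylor1_components. Qed.

Lemma vtaylor1_cross F G A B C D : vtaylor1 F A B -> vtaylor1 G C D ->
  vtaylor1 (fun l => cross (F l) (G l)) (cross A C) (vadd (cross A D) (cross B C)).
Proof. intros; vtaylor1_components. Qed.

Lemma taylor1_dot F G A B C D : vtaylor1 F A B -> vtaylor1 G C D ->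
  taylor1 (fun l => dot (F l) (G l)) (dot A C) (dot A D + dot B C).
Proof.
  intros (? & ? & ?) (? & ? & ?). unfold dot.
  eapply taylor1_eq; [taylor1_build | ring | ring].
Qed.

Lemma vtaylor1_shift (f : R -> vec3) th F' c :
  vtaylor1 (fun h => f (th + h)) (f th) F' ->
  vtaylor1 (fun l => f (th + l * c)) (f th) (vscal c F').
Proof.
  intros (Hx & Hy & Hz).
  repeat split; apply (taylor1_comp_scal (fun h => _ (f (th + h)))); assumption.
Qed.

Lemma vanalytic_vtaylor1 a b f th : vanalytic_on a b f -> a < th < b ->
  vtaylor1 (fun h => f (th + h)) (f th) (vderiv f th).
Proof.
  intros (Hx & Hy & Hz) Hth. unfold vderiv. repeat split; simpl.
  - exact (analytic_taylor1 _ _ (fun s => vx (f s)) _ Hx Hth).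
  - exact (analytic_taylor1 _ _ (fun s => vy (f s)) _ Hy Hth).
  - exact (analytic_taylor1 _ _ (fun s => vz (f s)) _ Hz Hth).
Qed.

Lemma vderiv_vtaylor1 f th A B : vtaylor1 (fun h => f (th + h)) A B -> vderiv f th = B.
Proof.
  intros (Hx & Hy & Hz). destruct B as [bx by0 bz]. unfold vderiv. simpl in *.
  f_equal; eapply taylor1_Derive; eassumption.
Qed.

Lemma vderiv_sub (f g : R -> vec3) a b th :
  vanalytic_on a b f -> vanalytic_on a b g -> a < th < b ->
  vderiv (fun x => vsub (f x) (g x)) th = vsub (vderiv f th) (vderiv g th).
Proof.
  intros Hf Hg Hth. eapply vderiv_vtaylor1, vtaylor1_sub; apply (vanalytic_vtaylor1 a b); auto.
Qed.

Lemma dot_const_deriv (f g : R -> vec3) F' G' a b th c : a < th < b ->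
  vtaylor1 (fun l => f (th + l)) (f th) F' -> vtaylor1 (fun l => g (th + l)) (g th) G' ->
  (forall s, a < s < b -> dot (f s) (g s) = c) -> dot F' (g th) + dot (f th) G' = 0.
Proof.
  intros Hth Hf Hg Hc. rewrite Rplus_comm.
  assert (Hd : 0 < Rmin (b - th) (th - a)) by (apply Rmin_pos; lra).
  eapply (taylor1_locally_const (fun l => dot (f (th + l)) (g (th + l))) c _ _ _ Hd);
    [| exact (taylor1_dot _ _ _ _ _ _ Hf Hg)].
  intros l Hl. apply Hc.
  pose proof (Rabs_def2 _ _ Hl). pose proof (Rmin_l (b - th) (th - a)).
  pose proof (Rmin_r (b - th) (th - a)). lra.
Qed.

Lemma sqrt_sum3_le x y z : sqrt (x * x + y * y + z * z) <= Rabs x + Rabs y + Rabs z.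
Proof.
  pose proof (Rabs_pos x); pose proof (Rabs_pos y); pose proof (Rabs_pos z).
  rewrite <- (sqrt_square (Rabs x + Rabs y + Rabs z)) by lra.
  apply sqrt_le_1_alt.
  assert (x * x = Rabs x * Rabs x) by (rewrite <- Rabs_mult, Rabs_pos_eq; nra).
  assert (y * y = Rabs y * Rabs y) by (rewrite <- Rabs_mult, Rabs_pos_eq; nra).
  assert (z * z = Rabs z * Rabs z) by (rewrite <- Rabs_mult, Rabs_pos_eq; nra).
  nra.
Qed.

Lemma Rabs_le_vnorm (X : vec3) :
  Rabs (vx X) <= vnorm X /\ Rabs (vy X) <= vnorm X /\ Rabs (vz X) <= vnorm X.
Proof.
  unfold vnorm, dot. destruct X as [x y z]; simpl.
  repeat split; rewrite <- sqrt_Rsqr_abs; apply sqrt_le_1_alt; unfold Rsqr; nra.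
Qed.

Lemma bigO_l2_iff F E : vtaylor1 F vzero E -> (bigO_l2 F <-> E = vzero).
Proof.
  intros HF; split.
  - intros (C & d & Hd & HO). destruct HF as (Hx & Hy & Hz).
    destruct E as [ex ey ez]; unfold vzero; simpl in *.
    assert (HN : forall l, 0 < l < d ->
      Rabs (vx (F l)) <= C * l ^ 2 /\ Rabs (vy (F l)) <= C * l ^ 2 /\ Rabs (vz (F l)) <= C * l ^ 2).
    { intros l Hl. pose proof (Rabs_le_vnorm (F l)). pose proof (HO l Hl). lra. }
    f_equal.
    + apply (taylor1_slope_eq0 _ _ C d Hx Hd). intros l Hl; apply (HN l Hl).
    + apply (taylor1_slope_eq0 _ _ C d Hy Hd). intros l Hl; apply (HN l Hl).
    + apply (taylor1_slope_eq0 _ _ C d Hz Hd). intros l Hl; apply (HN l Hl).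
  - intros ->. destruct HF as (Hx & Hy & Hz).
    destruct (taylor1_O2 _ Hx) as (d1 & M1 & Hd1 & H1).
    destruct (taylor1_O2 _ Hy) as (d2 & M2 & Hd2 & H2).
    destruct (taylor1_O2 _ Hz) as (d3 & M3 & Hd3 & H3).
    exists (M1 + M2 + M3), (Rmin d1 (Rmin d2 d3)). split; [repeat apply Rmin_pos; lra |].
    intros l [Hl0 Hl]. rewrite <- (Rabs_pos_eq l) in Hl by lra.
    unfold vnorm, dot. eapply Rle_trans; [apply sqrt_sum3_le |].
    pose proof (H1 l (Rabs_lt_min_l _ _ _ Hl)).
    pose proof (H2 l (Rabs_lt_min_l _ _ _ (Rabs_lt_min_r _ _ _ Hl))).
    pose proof (H3 l (Rabs_lt_min_r _ _ _ (Rabs_lt_min_r _ _ _ Hl))).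
    lra.
Qed.

(** * Mismatch of neighbouring tangents *)

(* For the crease T with derivative P, shifted by dth and rotated by w in the neighbouring
   cell, this is the coefficient of l in the difference of the two bent tangents; K is the
   difference of the bending terms. *)
Definition mismatch (P T w : vec3) (dth : R) (K : vec3) : vec3 :=
  vadd (vadd (vscal dth P) (cross w T)) K.

Lemma vtaylor1_nbr_mismatch (a b c : R -> vec3) (A' B' C' Bp w : vec3) (th dth km kp : R) :
  vtaylor1 (fun h => a (th + h)) (a th) A' ->
  vtaylor1 (fun h => b (th + h)) (b th) B' ->
  vtaylor1 (fun h => c (th + h)) (c th) C' ->
  vtaylor1
    (fun l => vsub (nbr l w dth (fun s => vadd (a s) (vscal (l * km) (cross (b s) (c s)))) th)
                   (vadd (a th) (vscal (l * kp) Bp)))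
    vzero (mismatch A' (a th) w dth (vsub (vscal km (cross (b th) (c th))) (vscal kp Bp))).
Proof.
  intros Ha Hb Hc.
  pose proof (vtaylor1_shift _ _ _ dth Ha) as Sa.
  pose proof (vtaylor1_shift _ _ _ dth Hb) as Sb.
  pose proof (vtaylor1_shift _ _ _ dth Hc) as Sc.
  assert (Hl : forall k, taylor1 (fun l => l * k) 0 k).
  { intros k.
    eapply taylor1_eq;
      [apply (taylor1_mult _ _ _ _ _ _ taylor1_id (taylor1_const k)) | ring | ring]. }
  pose proof (vtaylor1_add _ _ _ _ _ _ Sa
    (vtaylor1_scal _ _ _ _ _ _ (Hl km) (vtaylor1_cross _ _ _ _ _ _ Sb Sc))) as Sm.
  unfold nbr. eapply vtaylor1_eq.
  - apply vtaylor1_sub.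
    + apply vtaylor1_add; [exact Sm |].
      apply vtaylor1_scal; [exact taylor1_id |].
      apply vtaylor1_cross; [apply vtaylor1_const | exact Sm].
    + apply vtaylor1_add; [apply vtaylor1_const |].
      apply vtaylor1_scal; [apply Hl | apply vtaylor1_const].
  - unfold mismatch; vec_ring.
  - unfold mismatch; vec_ring.
Qed.

Lemma vsub_eq0 a b : vsub a b = vzero -> a = b.
Proof.
  destruct a, b; unfold vsub, vzero; simpl. intros H; injection H; intros; f_equal; lra.
Qed.

Lemma triple_cycle a b c : triple a b c = triple b c a.
Proof. vec_ring. Qed.

Lemma triple_swap23 a b c : triple a c b = - triple a b c.
Proof. vec_ring. Qed.

Lemma vsub_vscal_swap a b X Y :
  vsub (vscal a X) (vscal b Y) = vsub (vscal (- b) Y) (vscal (- a) X).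
Proof. vec_ring. Qed.

Lemma triple_dot_rotation (A T B P w : vec3) (dth a b : R) :
  let E := mismatch P T w dth (vsub (vscal b (cross T B)) (vscal a (cross A T))) in
  triple A T B * dot w P = dot P A * dot E B - dot P B * dot E A
    + triple A T B * (a * dot P A + b * dot P B) + dot P T * dot w (cross B A).
Proof. unfold mismatch; vec_ring. Qed.

Lemma dot_perp2 a b c X Y :
  dot X a = 0 -> dot X b = 0 -> triple a b c * dot X Y = dot X c * triple a b Y.
Proof.
  intros Ha Hb.
  assert (H : triple a b c * dot X Y
    = dot X a * dot (cross b c) Y + dot X b * dot (cross c a) Y + dot X c * triple a b Y)
    by vec_ring.
  rewrite H, Ha, Hb. ring.
Qed.

Lemma vzero_of_dot_basis a b c X :
  triple a b c <> 0 -> dot X a = 0 -> dot X b = 0 -> dot X c = 0 -> X = vzero.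
Proof.
  intros Hv Ha Hb Hc.
  assert (H : forall Y, triple a b c * dot X Y = 0).
  { intros Y. rewrite (dot_perp2 a b c X Y Ha Hb), Hc. ring. }
  destruct X as [x y z].
  pose proof (H (V3 1 0 0)) as Hx. pose proof (H (V3 0 1 0)) as Hy. pose proof (H (V3 0 0 1)) as Hz.
  unfold dot in Hx, Hy, Hz; simpl in Hx, Hy, Hz. unfold vzero.
  f_equal; apply (Rmult_eq_reg_l (triple a b c)); auto; lra.
Qed.

Lemma dot_vzero_l X : dot vzero X = 0.
Proof. vec_ring. Qed.

Lemma dot_vsub_r a X Y : dot a (vsub X Y) = dot a X - dot a Y.
Proof. vec_ring. Qed.

Lemma Rdiv_eq_of_mul k X V : V <> 0 -> X - k * V = 0 -> k = X / V.
Proof. intros HV H. apply (Rmult_eq_reg_r V); [| exact HV]. field_simplify; [lra | exact HV]. Qed.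

Lemma mismatch_dot_self P T w dth K :
  dot (mismatch P T w dth K) T = dth * dot P T + dot K T.
Proof. unfold mismatch; vec_ring. Qed.

(** * Rigidity of the vertex *)

Section Quadrilateral.

Variables T1 T2 T3 T4 : vec3.
Hypotheses (hV123 : triple T1 T2 T3 <> 0) (hV124 : triple T1 T2 T4 <> 0)
           (hV134 : triple T1 T3 T4 <> 0) (hV234 : triple T2 T3 T4 <> 0).

Local Notation V123 := (triple T1 T2 T3).
Local Notation V124 := (triple T1 T2 T4).
Local Notation V134 := (triple T1 T3 T4).
Local Notation V234 := (triple T2 T3 T4).

(* Each E_i is a multiple of a panel normal; closure expresses the other three multiples
   through [dot E2 T1], after which the last hypothesis reads [V234 * C * dot E2 T1 = 0]
   with C the coefficient of the first one. *)
Lemma quad_rigidity (E1 E2 E3 E4 : vec3) (p12 p23 p34 p41 : R) :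
  - p23 * V124 * V134 - p41 * V234 * V123 + p12 * V234 * V134 + p34 * V123 * V124 <> 0 ->
  dot E1 T1 = 0 -> dot E1 T2 = 0 -> dot E2 T2 = 0 -> dot E2 T3 = 0 ->
  dot E3 T3 = 0 -> dot E3 T4 = 0 -> dot E4 T4 = 0 -> dot E4 T1 = 0 ->
  vsub (vsub E1 E3) (vsub E2 E4) = vzero ->
  - V124 * V134 * V234 * p23 * dot E2 T1 + V123 * V124 * V234 * p41 * dot E4 T3
    + V123 * V134 * V234 * p12 * dot E1 T4 - V123 * V124 * V134 * p34 * dot E3 T2 = 0 ->
  E1 = vzero /\ E2 = vzero /\ E3 = vzero /\ E4 = vzero.
Proof.
  intros HC e11 e12 e22 e23 e33 e34 e44 e41 Hsum HL.
  assert (Z : forall Y, dot E1 Y - dot E3 Y - dot E2 Y + dot E4 Y = 0).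
  { intros Y. transitivity (dot (vsub (vsub E1 E3) (vsub E2 E4)) Y); [vec_ring |].
    rewrite Hsum. vec_ring. }
  assert (R1 : V123 * dot E1 T4 = V234 * dot E2 T1).
  { assert (H : dot E1 T4 = dot E2 T4) by (pose proof (Z T4); lra).
    rewrite H, (triple_cycle T1 T2 T3), (dot_perp2 T2 T3 T1 E2 T4 e22 e23). ring. }
  assert (R2 : V124 * dot E4 T3 = - (V234 * dot E2 T1)).
  { assert (H : dot E4 T3 = - dot E1 T3) by (pose proof (Z T3); lra).
    rewrite H, <- R1. transitivity (- (V124 * dot E1 T3)); [ring |].
    rewrite (dot_perp2 T1 T2 T4 E1 T3 e11 e12). ring. }
  assert (R3 : V134 * dot E3 T2 = - (V234 * dot E2 T1)).
  { assert (H : dot E2 T1 = - dot E3 T1) by (pose proof (Z T1); lra).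
    rewrite H, (triple_cycle T1 T3 T4), (triple_cycle T2 T3 T4).
    transitivity (triple T3 T4 T2 * dot E3 T1); [| ring].
    rewrite (dot_perp2 T3 T4 T2 E3 T1 e33 e34). ring. }
  assert (Hx : dot E2 T1 = 0).
  { set (C := - p23 * V124 * V134 - p41 * V234 * V123 + p12 * V234 * V134 + p34 * V123 * V124) in *.
    assert (H : V234 * dot E2 T1 * C = 0).
    { rewrite <- HL. unfold C.
      transitivity (- V124 * V134 * V234 * p23 * dot E2 T1 + V123 * V234 * p41 * (V124 * dot E4 T3)
        + V134 * V234 * p12 * (V123 * dot E1 T4) - V123 * V124 * p34 * (V134 * dot E3 T2)).
      - rewrite R1, R2, R3. ring.
      - ring. }
    apply Rmult_integral in H as [H | H]; [| contradiction].
    apply Rmult_integral in H as [H | H]; [contradiction | exact H]. }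
  rewrite Hx, Rmult_0_r in R1, R2, R3.
  apply Rmult_integral in R1 as [R1 | R1]; [contradiction |].
  rewrite Ropp_0 in R2, R3.
  apply Rmult_integral in R2 as [R2 | R2]; [contradiction |].
  apply Rmult_integral in R3 as [R3 | R3]; [contradiction |].
  repeat split.
  - apply (vzero_of_dot_basis T1 T2 T4); auto.
  - apply (vzero_of_dot_basis T1 T2 T3); auto.
  - apply (vzero_of_dot_basis T2 T3 T4); auto.
  - apply (vzero_of_dot_basis T1 T3 T4); auto.
Qed.

Variables P1 P2 P3 P4 : vec3.
Hypotheses (hP1 : dot P1 T1 = 0) (hP2 : dot P2 T2 = 0) (hP3 : dot P3 T3 = 0) (hP4 : dot P4 T4 = 0)
  (h12 : dot P1 T2 + dot P2 T1 = 0) (h23 : dot P2 T3 + dot P3 T2 = 0)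
  (h34 : dot P3 T4 + dot P4 T3 = 0) (h41 : dot P4 T1 + dot P1 T4 = 0).

Lemma rigidity_coefficient :
  - dot P2 T3 * V124 * V134 - dot P4 T1 * V234 * V123 + dot P1 T2 * V234 * V134
  + dot P3 T4 * V123 * V124 = - V124 * V234 * dot (vsub P1 P3) (vsub T1 T3).
Proof.
  assert (H : - dot P2 T3 * V124 * V134 - dot P4 T1 * V234 * V123 + dot P1 T2 * V234 * V134
    + dot P3 T4 * V123 * V124 =
    - V124 * V234 * dot (vsub P1 P3) (vsub T1 T3)
    - V124 * V134 * (dot P2 T3 + dot P3 T2) - V234 * V123 * (dot P4 T1 + dot P1 T4)
    + V124 * V234 * (dot P1 T1 + dot P3 T3) + V124 * V124 * dot P3 T3 + V234 * V234 * dot P1 T1)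
    by vec_ring.
  rewrite H, h23, h41, hP1, hP3. ring.
Qed.

Variables (wu wv : vec3) (k1 k2 k3 k4 dthu dthv : R).

Local Notation E1 :=
  (mismatch P1 T1 wv dthv (vsub (vscal k4 (cross T4 T1)) (vscal k1 (cross T1 T2)))).
Local Notation E2 :=
  (mismatch P2 T2 wu dthu (vsub (vscal k2 (cross T2 T3)) (vscal k1 (cross T1 T2)))).
Local Notation E3 :=
  (mismatch P3 T3 wv dthv (vsub (vscal k3 (cross T3 T4)) (vscal k2 (cross T2 T3)))).
Local Notation E4 :=
  (mismatch P4 T4 wu dthu (vsub (vscal k3 (cross T3 T4)) (vscal k4 (cross T4 T1)))).

Lemma mismatch_sum :
  vsub (vsub E1 E3) (vsub E2 E4) =
  vsub (vadd (cross wv (vsub T1 T3)) (vscal dthv (vsub P1 P3)))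
       (vadd (cross wu (vsub T2 T4)) (vscal dthu (vsub P2 P4))).
Proof. unfold mismatch; vec_ring. Qed.

Lemma mismatch_dot_diag : dot E1 T1 = 0 /\ dot E2 T2 = 0 /\ dot E3 T3 = 0 /\ dot E4 T4 = 0.
Proof.
  rewrite !mismatch_dot_self, hP1, hP2, hP3, hP4.
  repeat split; vec_ring.
Qed.

Lemma mismatch_dot_offdiag :
  dot E2 T3 = dot (cross T2 T3) wu + dot T3 P2 * dthu - k1 * V123 /\
  dot E3 T4 = dot (cross T3 T4) wv + dot P3 T4 * dthv - k2 * V234 /\
  dot E4 T1 = dot (cross T4 T1) wu + dot T1 P4 * dthu - k3 * triple T3 T1 T4 /\
  dot E1 T2 = dot (cross T1 T2) wv + dot P1 T2 * dthv - k4 * triple T4 T2 T1.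
Proof. repeat split; unfold mismatch; vec_ring. Qed.

Lemma mismatch_rotation_identity :
  V123 * V124 * V134 * V234 * (dot wu (vsub P2 P4) - dot wv (vsub P1 P3)) =
  - V124 * V134 * V234 * (dot P1 T2 * dot E2 T3 + dot P2 T3 * dot E2 T1)
  + V123 * V124 * V234 * (dot P3 T4 * dot E4 T1 + dot P4 T1 * dot E4 T3)
  + V123 * V134 * V234 * (dot P4 T1 * dot E1 T2 + dot P1 T2 * dot E1 T4)
  - V123 * V124 * V134 * (dot P2 T3 * dot E3 T4 + dot P3 T4 * dot E3 T2).
Proof.
  pose proof (triple_dot_rotation T1 T2 T3 P2 wu dthu k1 k2) as X2.
  pose proof (triple_dot_rotation T2 T3 T4 P3 wv dthv k2 k3) as X3.
  pose proof (triple_dot_rotation T4 T1 T2 P1 wv dthv (- k4) (- k1)) as X1.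
  pose proof (triple_dot_rotation T3 T4 T1 P4 wu dthu (- k3) (- k4)) as X4.
  cbv zeta in X1, X2, X3, X4.
  rewrite <- vsub_vscal_swap, (triple_cycle T4 T1 T2) in X1.
  rewrite <- vsub_vscal_swap, <- (triple_cycle T1 T3 T4) in X4.
  replace (dot P2 T1) with (- dot P1 T2) in X2 by lra.
  replace (dot P3 T2) with (- dot P2 T3) in X3 by lra.
  replace (dot P1 T4) with (- dot P4 T1) in X1 by lra.
  replace (dot P4 T3) with (- dot P3 T4) in X4 by lra.
  rewrite hP2 in X2. rewrite hP3 in X3. rewrite hP1 in X1. rewrite hP4 in X4.
  rewrite !dot_vsub_r.
  transitivity (V124 * V134 * V234 * (V123 * dot wu P2) - V123 * V124 * V234 * (V134 * dot wu P4)
    - V123 * V134 * V234 * (V124 * dot wv P1) + V123 * V124 * V134 * (V234 * dot wv P3)); [ring |].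
  rewrite X1, X2, X3, X4. ring.
Qed.

Lemma mismatch_zero_iff (huu : dot (vsub P1 P3) (vsub T1 T3) <> 0) :
  (E1 = vzero /\ E3 = vzero /\ E2 = vzero /\ E4 = vzero) <->
  ((vadd (cross wu (vsub T2 T4)) (vscal dthu (vsub P2 P4)) =
    vadd (cross wv (vsub T1 T3)) (vscal dthv (vsub P1 P3)) /\
    dot wu (vsub P2 P4) = dot wv (vsub P1 P3)) /\
   (k1 = (dot (cross T2 T3) wu + dot T3 P2 * dthu) / V123 /\
    k2 = (dot (cross T3 T4) wv + dot P3 T4 * dthv) / V234 /\
    k3 = (dot (cross T4 T1) wu + dot T1 P4 * dthu) / triple T3 T1 T4 /\
    k4 = (dot (cross T1 T2) wv + dot P1 T2 * dthv) / triple T4 T2 T1)).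
Proof.
  destruct mismatch_dot_diag as (d1 & d2 & d3 & d4).
  destruct mismatch_dot_offdiag as (o2 & o3 & o4 & o1).
  pose proof mismatch_sum as Hsum. pose proof mismatch_rotation_identity as Hrot.
  assert (hV314 : triple T3 T1 T4 <> 0).
  { rewrite (triple_cycle T3 T1 T4), triple_swap23. intro H; apply hV134; lra. }
  assert (hV421 : triple T4 T2 T1 <> 0).
  { rewrite triple_swap23, (triple_cycle T4 T1 T2). intro H; apply hV124; lra. }
  split.
  - intros (H1 & H3 & H2 & H4).
    rewrite H1, H2, H3, H4, ?dot_vzero_l in *.
    split; [split |].
    + symmetry; apply vsub_eq0. rewrite <- Hsum. vec_ring.
    + assert (HV : V123 * V124 * V134 * V234 <> 0)
        by (repeat apply Rmult_integral_contrapositive_currified; auto).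
      assert (Hz : V123 * V124 * V134 * V234 * (dot wu (vsub P2 P4) - dot wv (vsub P1 P3)) = 0)
        by (rewrite Hrot; ring).
      apply Rmult_integral in Hz as [Hz | Hz]; [contradiction | lra].
    + repeat split; apply Rdiv_eq_of_mul; auto; lra.
  - intros ((HA & HS) & B1 & B2 & B3 & B4).
    assert (z23 : dot E2 T3 = 0) by (rewrite o2, B1; field; auto).
    assert (z34 : dot E3 T4 = 0) by (rewrite o3, B2; field; auto).
    assert (z41 : dot E4 T1 = 0) by (rewrite o4, B3; field; auto).
    assert (z12 : dot E1 T2 = 0) by (rewrite o1, B4; field; auto).
    destruct (quad_rigidity E1 E2 E3 E4 (dot P1 T2) (dot P2 T3) (dot P3 T4) (dot P4 T1))
      as (H1 & H2 & H3 & H4); auto.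
    + rewrite rigidity_coefficient. repeat apply Rmult_integral_contrapositive_currified; auto; lra.
    + rewrite Hsum, HA. vec_ring.
    + rewrite HS, Rminus_diag, Rmult_0_r, z23, z34, z41, z12 in Hrot. lra.
Qed.

End Quadrilateral.

(** * Compatible rotations *)

Ltac planar_coordinates u v u' v' wu wv :=
  destruct u as [ux uy uz], v as [vx vy vz], u' as [px py pz], v' as [qx qy qz],
    wu as [ax ay az], wv as [bx by0 bz];
  unfold dot, cross, e3, vadd, vscal in *; cbn in *;
  repeat match goal with
  | H : ?x * 0 + ?y * 0 + ?z * 1 = 0 |- _ =>
      assert (z = 0) by lra; subst z; clear H
  end;
  match goal with
  | H : context [0 * (?a * 0 - 0 * ?b) + 0 * (0 * ?c - ?d * 0) + 1 * ?D] |- _ =>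
      replace (0 * (a * 0 - 0 * b) + 0 * (0 * c - d * 0) + 1 * D) with D in * by ring
  end.

Lemma rotation_compat_params (u v u' v' wu wv : vec3) (dthu dthv : R) :
  dot u e3 = 0 -> dot v e3 = 0 -> dot u' e3 = 0 -> dot v' e3 = 0 ->
  dot e3 (cross u v) <> 0 -> dot u' v + dot u v' = 0 -> dot u' u <> 0 ->
  vadd (cross wu v) (vscal dthu v') = vadd (cross wv u) (vscal dthv u') ->
  dot wu v' = dot wv u' ->
  exists k tau : R,
    wu = vadd (vadd (vscal tau u) (vscal (k * dot u' u) v))
           (vscal ((dthu * dot v' u - dthv * dot u' u) / dot e3 (cross u v)) e3) /\
    wv = vadd (vadd (vscal (k * dot v' v) u) (vscal (- tau) v))
           (vscal ((dthu * dot v' v - dthv * dot u' v) / dot e3 (cross u v)) e3).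
Proof.
  intros hu hv hu' hv' hD huv huu HA HS. planar_coordinates u v u' v' wu wv.
  set (D := ux * vy - uy * vx) in *.
  assert (Huu : px * ux + py * uy <> 0) by (intro H; apply huu; lra).
  injection HA as Ex Ey Ez.
  (* the planar part of wu in the basis (u, v) gives tau and k *)
  exists ((ux * ay - uy * ax) / D / (px * ux + py * uy)), ((ax * vy - ay * vx) / D).
  assert (Hz : az * D = dthu * (qx * ux + qy * uy) - dthv * (px * ux + py * uy)).
  { pose proof (f_equal2 Rplus (f_equal (Rmult ux) Ex) (f_equal (Rmult uy) Ey)). unfold D; lra. }
  assert (Hz' : bz * D = dthu * (qx * vx + qy * vy) - dthv * (px * vx + py * vy)).
  { pose proof (f_equal2 Rplus (f_equal (Rmult vx) Ex) (f_equal (Rmult vy) Ey)). unfold D; lra. }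
  assert (Hd : ux * by0 - uy * bx = - (ax * vy - ay * vx)) by lra.
  assert (Hc : (bx * vy - by0 * vx) * (px * ux + py * uy)
               = (ux * ay - uy * ax) * (qx * vx + qy * vy)).
  { assert (I1 : D * (ax * qx + ay * qy + az * 0) =
      (ax * vy - ay * vx) * (ux * qx + uy * qy) + (ux * ay - uy * ax) * (vx * qx + vy * qy))
      by (unfold D; ring).
    assert (I2 : D * (bx * px + by0 * py + bz * 0) =
      (bx * vy - by0 * vx) * (ux * px + uy * py) + (ux * by0 - uy * bx) * (vx * px + vy * py))
      by (unfold D; ring).
    rewrite HS in I1. rewrite Hd in I2.
    pose proof (f_equal (Rmult (ax * vy - ay * vx)) huv). lra. }
  assert (HDu : D * (px * ux + py * uy + 0 * 0) <> 0)
    by (apply Rmult_integral_contrapositive_currified; auto; lra).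
  split; f_equal.
  - unfold D in *; field; auto.
  - unfold D in *; field; auto.
  - apply (Rmult_eq_reg_l D); auto. rewrite (Rmult_comm D az), Hz. field; auto.
  - refine (Rmult_eq_reg_l _ _ _ _ HDu).
    transitivity ((bx * vy - by0 * vx) * (px * ux + py * uy) * ux
                  + (ux * by0 - uy * bx) * (px * ux + py * uy) * vx); [unfold D; ring |].
    rewrite Hc, Hd. unfold D in *; field. split; auto; lra.
  - refine (Rmult_eq_reg_l _ _ _ _ HDu).
    transitivity ((bx * vy - by0 * vx) * (px * ux + py * uy) * uy
                  + (ux * by0 - uy * bx) * (px * ux + py * uy) * vy); [unfold D; ring |].
    rewrite Hc, Hd. unfold D in *; field. split; auto; lra.
  - apply (Rmult_eq_reg_l D); auto. rewrite (Rmult_comm D bz), Hz'. field; auto.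
Qed.

Lemma rotation_compat_iff (u v u' v' wu wv : vec3) (dthu dthv : R) :
  dot u e3 = 0 -> dot v e3 = 0 -> dot u' e3 = 0 -> dot v' e3 = 0 ->
  dot e3 (cross u v) <> 0 -> dot u' v + dot u v' = 0 -> dot u' u <> 0 ->
  (vadd (cross wu v) (vscal dthu v') = vadd (cross wv u) (vscal dthv u') /\
   dot wu v' = dot wv u') <->
  exists k tau : R,
    wu = vadd (vadd (vscal tau u) (vscal (k * dot u' u) v))
           (vscal ((dthu * dot v' u - dthv * dot u' u) / dot e3 (cross u v)) e3) /\
    wv = vadd (vadd (vscal (k * dot v' v) u) (vscal (- tau) v))
           (vscal ((dthu * dot v' v - dthv * dot u' v) / dot e3 (cross u v)) e3).
Proof.
  intros hu hv hu' hv' hD huv huu. split.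
  - intros [HA HS]. exact (rotation_compat_params u v u' v' wu wv dthu dthv
                             hu hv hu' hv' hD huv huu HA HS).
  - intros (k & tau & Hwu & Hwv). planar_coordinates u v u' v' wu wv.
    injection Hwu as -> -> ->. injection Hwv as -> -> ->.
    split.
    + f_equal; field; auto.
    + apply Rminus_diag_uniq.
      transitivity (tau * (px * vx + py * vy + 0 * 0 + (ux * qx + uy * qy + 0 * 0)));
        [field; auto | rewrite huv; ring].
Qed.

Lemma dot_comm a b : dot a b = dot b a.
Proof. vec_ring. Qed.

Lemma dot_vzero_r a : dot a vzero = 0.
Proof. vec_ring. Qed.

Lemma dot_diagonals_split (P1 P2 P3 P4 T1 T2 T3 T4 : vec3) :
  dot (vsub P1 P3) (vsub T2 T4) + dot (vsub T1 T3) (vsub P2 P4) =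
  (dot P1 T2 + dot P2 T1) - (dot P4 T1 + dot P1 T4)
  - (dot P2 T3 + dot P3 T2) + (dot P3 T4 + dot P4 T3).
Proof. vec_ring. Qed.

Lemma mechanism_first_order a b r1 r2 r3 r4 (t1 t2 t3 t4 : R -> vec3) th :
  mechanism a b r1 r2 r3 r4 t1 t2 t3 t4 -> a < th < b ->
  let T1 := t1 th in let T2 := t2 th in let T3 := t3 th in let T4 := t4 th in
  let P1 := vderiv t1 th in let P2 := vderiv t2 th in
  let P3 := vderiv t3 th in let P4 := vderiv t4 th in
  (dot P1 T1 = 0 /\ dot P2 T2 = 0 /\ dot P3 T3 = 0 /\ dot P4 T4 = 0) /\
  (dot P1 T2 + dot P2 T1 = 0 /\ dot P2 T3 + dot P3 T2 = 0 /\
   dot P3 T4 + dot P4 T3 = 0 /\ dot P4 T1 + dot P1 T4 = 0) /\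
  dot (vsub P1 P3) e3 = 0 /\ dot (vsub P2 P4) e3 = 0.
Proof.
  intros (_ & A1 & A2 & A3 & A4 & _ & _ & _ & _ & Hcons & _) Hth. cbv zeta.
  pose proof (vanalytic_vtaylor1 _ _ _ _ A1 Hth) as D1.
  pose proof (vanalytic_vtaylor1 _ _ _ _ A2 Hth) as D2.
  pose proof (vanalytic_vtaylor1 _ _ _ _ A3 Hth) as D3.
  pose proof (vanalytic_vtaylor1 _ _ _ _ A4 Hth) as D4.
  assert (Hdot : forall (f g : R -> vec3) c,
      vtaylor1 (fun l => f (th + l)) (f th) (vderiv f th) ->
      vtaylor1 (fun l => g (th + l)) (g th) (vderiv g th) ->
      (forall s, a < s < b -> dot (f s) (g s) = c) ->
      dot (vderiv f th) (g th) + dot (vderiv g th) (f th) = 0).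
  { intros f g c Hf Hg Hc. rewrite (dot_comm (vderiv g th)).
    exact (dot_const_deriv _ _ _ _ _ _ _ _ Hth Hf Hg Hc). }
  assert (Hnorm : forall (f : R -> vec3) c,
      vtaylor1 (fun l => f (th + l)) (f th) (vderiv f th) ->
      (forall s, a < s < b -> dot (f s) (f s) = c) -> dot (vderiv f th) (f th) = 0).
  { intros f c Hf Hc. pose proof (Hdot f f c Hf Hf Hc). lra. }
  assert (Hplanar : forall (f g : R -> vec3),
      vtaylor1 (fun l => f (th + l)) (f th) (vderiv f th) ->
      vtaylor1 (fun l => g (th + l)) (g th) (vderiv g th) ->
      (forall s, a < s < b -> dot (vsub (f s) (g s)) e3 = 0) ->
      dot (vsub (vderiv f th) (vderiv g th)) e3 = 0).
  { intros f g Hf Hg Hc.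
    pose proof (dot_const_deriv (fun s => vsub (f s) (g s)) (fun _ => e3) _ _ _ _ _ _ Hth
                  (vtaylor1_sub _ _ _ _ _ _ Hf Hg) (vtaylor1_const e3) Hc) as H.
    rewrite dot_vzero_r in H. lra. }
  repeat split;
    [ eapply Hnorm | eapply Hnorm | eapply Hnorm | eapply Hnorm
    | eapply Hdot | eapply Hdot | eapply Hdot | eapply Hdot | eapply Hplanar | eapply Hplanar ];
    try eassumption; intros s Hs; specialize (Hcons s Hs);
    repeat match goal with H : _ /\ _ |- _ => destruct H end; eassumption.
Qed.

Theorem mainTheorem8
  (thm thp : R) (r1 r2 r3 r4 : vec3) (t1 t2 t3 t4 : R -> vec3)
  (Hdesign : design r1 r2 r3 r4)
  (Hmech : mechanism thm thp r1 r2 r3 r4 t1 t2 t3 t4)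
  (* consequences of the mechanism stated in the context *)
  (Huu : forall s, thm < s < thp ->
     dot (vderiv (fun x => vsub (t1 x) (t3 x)) s) (vsub (t1 s) (t3 s)) <> 0)
  (Hvv : forall s, thm < s < thp ->
     dot (vderiv (fun x => vsub (t2 x) (t4 x)) s) (vsub (t2 s) (t4 s)) <> 0)
  (HV : forall s, thm < s < thp ->
     triple (t1 s) (t2 s) (t3 s) <> 0 /\ triple (t1 s) (t2 s) (t4 s) <> 0 /\
     triple (t1 s) (t3 s) (t4 s) <> 0 /\ triple (t2 s) (t3 s) (t4 s) <> 0)
  (th : R) (Hth : thm < th < thp)
  (k1 k2 k3 k4 dthu dthv : R) (wu wv : vec3) :
  let u := fun x => vsub (t1 x) (t3 x) in
  let v := fun x => vsub (t2 x) (t4 x) in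
  let u_ := u th in let v_ := v th in
  let u' := vderiv u th in let v' := vderiv v th in
  let T1 := t1 th in let T2 := t2 th in let T3 := t3 th in let T4 := t4 th in
  let condA :=
    vadd (cross wu v_) (vscal dthu v') = vadd (cross wv u_) (vscal dthv u') /\
    dot wu v' = dot wv u' in
  let condB :=
    k1 = (dot (cross T2 T3) wu + dot T3 (vderiv t2 th) * dthu) / triple T1 T2 T3 /\
    k2 = (dot (cross T3 T4) wv + dot (vderiv t3 th) T4 * dthv) / triple T2 T3 T4 /\
    k3 = (dot (cross T4 T1) wu + dot T1 (vderiv t4 th) * dthu) / triple T3 T1 T4 /\
    k4 = (dot (cross T1 T2) wv + dot (vderiv t1 th) T2 * dthv) / triple T4 T2 T1 in
  ((bigO_l2 (fun l => vsub (nbr l wv dthv (t1m t1 t2 t3 t4 l k1 k2 k3 k4) th)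
                           (t1p t1 t2 t3 t4 l k1 k2 k3 k4 th)) /\
    bigO_l2 (fun l => vsub (nbr l wv dthv (t3m t1 t2 t3 t4 l k1 k2 k3 k4) th)
                           (t3p t1 t2 t3 t4 l k1 k2 k3 k4 th)) /\
    bigO_l2 (fun l => vsub (nbr l wu dthu (t2m t1 t2 t3 t4 l k1 k2 k3 k4) th)
                           (t2p t1 t2 t3 t4 l k1 k2 k3 k4 th)) /\
    bigO_l2 (fun l => vsub (nbr l wu dthu (t4m t1 t2 t3 t4 l k1 k2 k3 k4) th)
                           (t4p t1 t2 t3 t4 l k1 k2 k3 k4 th)))
   <-> condA /\ condB) /\
  (condA <->
   exists k tau : R,
     wu = vadd (vadd (vscal tau u_) (vscal (k * dot u' u_) v_))
               (vscal ((dthu * dot v' u_ - dthv * dot u' u_) / dot e3 (cross u_ v_)) e3) /\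
     wv = vadd (vadd (vscal (k * dot v' v_) u_) (vscal (- tau) v_))
               (vscal ((dthu * dot v' v_ - dthv * dot u' v_) / dot e3 (cross u_ v_)) e3)).
Proof.
  cbv zeta.
  pose proof Hmech as (_ & A1 & A2 & A3 & A4 & _ & _ & _ & _ & Hcons & _).
  destruct (mechanism_first_order _ _ _ _ _ _ _ _ _ _ th Hmech Hth)
    as ((c1 & c2 & c3 & c4) & (a12 & a23 & a34 & a41) & n13 & n24).
  destruct (HV th Hth) as (V123 & V124 & V134 & V234).
  destruct (Hcons th Hth) as (_ & _ & _ & _ & _ & _ & _ & _ & _ & _ & _ & _ & m13 & m24 & mD).
  pose proof (Huu th Hth) as huu.
  rewrite (vderiv_sub t1 t3 thm thp th A1 A3 Hth), (vderiv_sub t2 t4 thm thp th A2 A4 Hth) in *.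
  pose proof (vanalytic_vtaylor1 _ _ _ _ A1 Hth) as D1.
  pose proof (vanalytic_vtaylor1 _ _ _ _ A2 Hth) as D2.
  pose proof (vanalytic_vtaylor1 _ _ _ _ A3 Hth) as D3.
  pose proof (vanalytic_vtaylor1 _ _ _ _ A4 Hth) as D4.
  split.
  - unfold t1m, t1p, t2m, t2p, t3m, t3p, t4m, t4p.
    rewrite (bigO_l2_iff _ _ (vtaylor1_nbr_mismatch t1 t4 t1 _ _ _ _ wv th dthv k4 k1 D1 D4 D1)),
      (bigO_l2_iff _ _ (vtaylor1_nbr_mismatch t3 t3 t4 _ _ _ _ wv th dthv k3 k2 D3 D3 D4)),
      (bigO_l2_iff _ _ (vtaylor1_nbr_mismatch t2 t2 t3 _ _ _ _ wu th dthu k2 k1 D2 D2 D3)),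
      (bigO_l2_iff _ _ (vtaylor1_nbr_mismatch t4 t3 t4 _ _ _ _ wu th dthu k3 k4 D4 D3 D4)).
    apply mismatch_zero_iff; auto.
  - apply rotation_compat_iff; auto.
    + apply Rgt_not_eq; exact mD.
    + rewrite dot_diagonals_split, a12, a23, a34, a41. ring.
Qed.
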